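(* Let $0\le \ell<n$ be integers, let $d$ be a divisor of $n$ and let $y\in\mathbb{Z}_{n,d}$. Then the number of $x\in\mathbb{Z}_n^*$ such that $xb\equiv y\pmod n$ for some integer $b$ with $0\le b\le \ell$ equals $$\frac{\varphi\!\left(\frac{n}{d},\left\lfloor \frac{\ell}{d}\right\rfloor\right)}{\varphi\!\left(\frac nd\right)}\,\varphi(n).$$
   Context: $\mathbb{Z}_m=\{0,1,\dots,m-1\}$ denotes the integers modulo $m$; $\mathbb{Z}_{m,d}=\{x\in\mathbb{Z}_m:\gcd(x,m)=d\}$ and $\mathbb{Z}_m^*=\mathbb{Z}_{m,1}$. $\varphi(m)=|\mathbb{Z}_m^*|$ is Euler's totient function, and the relative totient function is $\varphi(m,k)=|\{x\in\mathbb{Z}_m^*: x\le k\}|$. *)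

From mathcomp Require Import all_boot all_order all_algebra.
Set Implicit Arguments. Unset Strict Implicit. Unset Printing Implicit Defensive.

Definition Zmd (m d : nat) : seq nat := [seq x <- iota 0 m | gcdn x m == d].

Definition Zstar (m : nat) : seq nat := Zmd m 1.

Definition rel_totient (m k : nat) : nat := count (fun x => x <= k) (Zstar m).

From mathcomp Require Import all_boot all_order all_algebra.
From mathcomp Require Import cyclic.
From mathcomp Require Import ring.
Set Implicit Arguments. Unset Strict Implicit.

(* Write n = m d and y = y' d.  A solution b of x b = y (mod n) with x a unit
   satisfies gcd(b, n) = gcd(y, n) = d, so b = b' d with b' a unit mod m and
   x b' = y' (mod m); hence the solvable x are those hit by some unit
   b' <= l / d.  Reduction mod m maps the units mod n onto the units mod m
   with fibres of constant size K, and for each fixed unit b' the x with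
   x b' = y' (mod m) form one such fibre.  The count is therefore
   phi(m, l / d) K, while phi(n) = phi(m) K. *)

Lemma mem_Zstar n x : (x \in Zstar n) = (x < n) && coprime x n.
Proof. by rewrite /Zstar /Zmd mem_filter mem_iota andbC. Qed.

Lemma uniq_Zstar n : uniq (Zstar n).
Proof. by rewrite filter_uniq // iota_uniq. Qed.

Lemma size_Zstar n : size (Zstar n) = totient n.
Proof.
rewrite totient_count_coprime size_filter -sum1_count big_mkcond /=.
rewrite /index_iota subn0; apply: eq_bigr => i _.
by rewrite /coprime gcdnC; case: (_ == 1).
Qed.

Lemma count_has_uniq (S T : eqType) (s : seq S) (B : seq T) (R : S -> T -> bool) :
    uniq B ->
    {in s, forall x, {in B &, forall b1 b2, R x b1 -> R x b2 -> b1 = b2}} ->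
  count (fun x => has (R x) B) s = \sum_(b <- B) count (R^~ b) s.
Proof.
elim: B => [|b B IH] /=; first by rewrite big_nil -(count_pred0 s).
move=> /andP[bB uB] Runiq; rewrite big_cons -IH //; last first.
  by move=> x xs b1 b2 b1B b2B; apply: Runiq; rewrite // inE ?b1B ?b2B orbT.
rewrite -(count_predUI (R^~ b)) -[LHS]addn0; congr (_ + _).
rewrite (@eq_in_count _ _ pred0) ?count_pred0 // => x xs /=.
apply/negbTE/andP=> -[Rxb /hasP[b' b'B Rxb']].
have eqb : b = b' by apply: (Runiq x) => //; rewrite inE ?b'B ?eqxx ?orbT.
by move: bB; rewrite eqb b'B.
Qed.

Lemma eqn_modMl_coprime c k x z :
  coprime c k -> (c * x == c * z %[mod k]) = (x == z %[mod k]).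
Proof.
move=> ck; wlog zx : x z / z <= x.
  move=> H; case: (leqP z x) => [/H //|/ltnW/H Hzx].
  by rewrite eq_sym Hzx eq_sym.
by rewrite !eqn_mod_dvd ?leq_mul2l ?zx ?orbT // -mulnBr Gauss_dvdr 1?coprime_sym.
Qed.

Lemma eqn_modM2r d a b m :
  0 < d -> (a * d == b * d %[mod m * d]) = (a == b %[mod m]).
Proof. by move=> d0; rewrite -!muln_modl eqn_pmul2r. Qed.

(* [u + m k], where k is the product of the primes of n not dividing u, is
   divisible by no prime of n. *)
Lemma coprime_lift m n u : 0 < n -> m %| n -> coprime u m ->
  exists2 w, coprime w n & w = u %[mod m].
Proof.
move=> n0 mn um; pose k := \prod_(p <- primes n | ~~ (p %| u)) p.
exists (u + m * k); last by rewrite addnC mulnC modnMDl.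
have g0 : 0 < gcdn (u + m * k) n by rewrite gcdn_gt0 n0 orbT.
rewrite /coprime eqn_leq g0 andbT leqNgt; apply/negP => /pdivP[p pp pg].
have pw : p %| u + m * k := dvdn_trans pg (dvdn_gcdl _ _).
have pn : p %| n := dvdn_trans pg (dvdn_gcdr _ _).
have pin : p \in primes n by rewrite mem_primes pp n0 pn.
have Ek : (p %| k) = ~~ (p %| u).
  rewrite Euclid_dvd_prod // big_has_cond; apply/hasP/idP => [[q qn]|pu].
    case/andP=> qu; rewrite dvdn_prime2 //; first by move/eqP->.
    by move: qn; rewrite mem_primes => /andP[].
  by exists p; rewrite //= pu dvdnn.
case pu: (p %| u); last by move: pw; rewrite dvdn_addl ?pu // dvdn_mull // Ek pu.
have pm : ~~ (p %| m) by rewrite -prime_coprime //; apply: coprime_dvdl pu um.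
by move: pw; rewrite dvdn_addr // Euclid_dvdM // Ek pu orbF (negbTE pm).
Qed.

Lemma coprime_of_gcdnM d a b : 0 < d -> gcdn (a * d) (b * d) = d -> coprime a b.
Proof.
by move=> d0 /eqP; rewrite -muln_gcdl -{2}(mul1n d) eqn_pmul2r.
Qed.

Lemma modn_inverse m a : 0 < m -> coprime a m ->
  exists2 i, i \in Zstar m & a * i = 1 %[mod m].
Proof.
move=> m0 am; exists (a ^ (totient m).-1 %% m).
  by rewrite mem_Zstar ltn_pmod // coprime_modl coprimeXl.
by rewrite modnMmr -expnS prednK ?totient_gt0 // Euler_exp_totient.
Qed.

Lemma perm_Zstar_mul n w :
  coprime w n -> perm_eq [seq w * x %% n | x <- Zstar n] (Zstar n).
Proof.
move=> wn; have injw : {in Zstar n &, injective (fun x => w * x %% n)}.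
  move=> x z; rewrite !mem_Zstar => /andP[xn _] /andP[zn _] /eqP.
  by rewrite eqn_modMl_coprime // !modn_small // => /eqP.
have uniqw : uniq [seq w * x %% n | x <- Zstar n].
  by rewrite map_inj_in_uniq ?uniq_Zstar.
apply: uniq_perm uniqw (uniq_Zstar n) (uniq_min_size uniqw _ _).2.
  move=> y /mapP[x]; rewrite !mem_Zstar => /andP[xn xcop] ->.
  by rewrite ltn_pmod ?(leq_ltn_trans _ xn) // coprime_modl coprimeMl wn.
by rewrite size_map.
Qed.

Definition units_kernel_size (n m : nat) : nat :=
  count (fun x => x == 1 %[mod m]) (Zstar n).

(* Multiplication by a unit w = c a^-1 (mod m) permutes the units mod n and
   carries the kernel onto the solutions of x a = c (mod m). *)
Lemma count_Zstar_congr n m a c : 0 < n -> m %| n -> coprime a m -> coprime c m ->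
  count (fun x => x * a == c %[mod m]) (Zstar n) = units_kernel_size n m.
Proof.
move=> n0 mn am cm; have m0 := dvdn_gt0 n0 mn.
have [i /[!mem_Zstar] /andP[_ im] ai] := modn_inverse m0 am.
have [w wn wci] : exists2 w, coprime w n & w = c * i %[mod m].
  by apply: coprime_lift; rewrite // coprimeMl cm.
rewrite -(seq.permP (perm_Zstar_mul wn)) count_map; apply: eq_in_count => x _ /=.
have -> : w * x %% n * a = c * x %[mod m].
  rewrite -modnMml (modn_dvdm _ mn) modnMml -mulnA -modnMml wci modnMml.
  have -> : c * i * (x * a) = c * x * (a * i) by ring.
  by rewrite -modnMmr ai modnMmr muln1.
by rewrite -{2}[c]muln1 eqn_modMl_coprime.
Qed.

Lemma count_has_Zstar_congr n m (B : seq nat) c :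
    0 < n -> m %| n -> uniq B -> {subset B <= Zstar m} -> coprime c m ->
  count (fun x => has (fun b => x * b == c %[mod m]) B) (Zstar n)
  = size B * units_kernel_size n m.
Proof.
move=> n0 mn uB BZ cm; rewrite count_has_uniq //; last first.
  move=> x /[!mem_Zstar] /andP[_ xn] b1 b2 /BZ/[!mem_Zstar] /andP[b1m _].
  move=> /BZ/[!mem_Zstar] /andP[b2m _] /eqP h1 /eqP h2.
  move/eqP: (etrans h1 (esym h2)).
  by rewrite eqn_modMl_coprime ?(coprime_dvdr mn) // !modn_small // => /eqP.
rewrite big_seq (eq_bigr (fun=> units_kernel_size n m)) => [|b].
  by rewrite -big_seq big_const_seq count_predT iter_addn_0 mulnC.
by move=> /BZ/[!mem_Zstar] /andP[_ bm]; apply: count_Zstar_congr.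
Qed.

Lemma totient_units_kernel n m : 0 < n -> m %| n ->
  totient n = totient m * units_kernel_size n m.
Proof.
move=> n0 mn; have m0 := dvdn_gt0 n0 mn.
have := @count_has_Zstar_congr n m (Zstar m) 1 n0 mn (uniq_Zstar m) (fun=> id).
rewrite -!size_Zstar coprime1n => <- //.
rewrite -count_predT; apply: eq_in_count => x /[!mem_Zstar] /andP[_ xn] /=.
have [i im xi] := modn_inverse m0 (coprime_dvdr mn xn).
by symmetry; apply/hasP; exists i; rewrite ?xi.
Qed.

Lemma Zmd_coprime_div n d y : y \in Zmd n d -> 0 < d /\ coprime (y %/ d) (n %/ d).
Proof.
rewrite mem_filter mem_iota => /andP[/eqP gy /andP[_ yn]].
have d0 : 0 < d by rewrite -gy gcdn_gt0 (leq_ltn_trans (leq0n y) yn) orbT.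
split=> //; apply: (coprime_of_gcdnM d0).
by rewrite !divnK // -gy ?dvdn_gcdr ?dvdn_gcdl.
Qed.

Lemma has_congr_reduce n d l x y : l < n -> y \in Zmd n d -> x \in Zstar n ->
  has (fun b => x * b == y %[mod n]) (iota 0 l.+1)
  = has (fun b => x * b == y %/ d %[mod n %/ d]) [seq b <- Zstar (n %/ d) | b <= l %/ d].
Proof.
move=> ln yZ /[!mem_Zstar] /andP[_ xn]; have [d0 _] := Zmd_coprime_div yZ.
move: yZ => /[!mem_filter] /andP[/eqP gy _].
have nE : n = n %/ d * d by rewrite divnK // -gy dvdn_gcdr.
have yE : y = y %/ d * d by rewrite divnK // -gy dvdn_gcdl.
apply/hasP/hasP => -[b].
  rewrite mem_iota ltnS => /andP[_ bl] xb; have /eqP eqxb := xb.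
  have gb : gcdn b n = d.
    rewrite -gy -[in RHS]gcdn_modl -eqxb gcdn_modl [in RHS]gcdnC.
    by rewrite Gauss_gcdr 1?gcdnC 1?coprime_sym.
  have bE : b = b %/ d * d by rewrite divnK // -gb dvdn_gcdl.
  exists (b %/ d).
    rewrite mem_filter mem_Zstar leq_divRL // -bE bl -(ltn_pmul2r d0) -bE -nE.
    by rewrite (leq_ltn_trans bl ln) (coprime_of_gcdnM d0) // -bE -nE.
  by rewrite -(eqn_modM2r _ _ _ d0) -mulnA -bE -yE -nE.
rewrite mem_filter mem_Zstar leq_divRL // => /andP[bl _] xb.
by exists (b * d); rewrite ?mem_iota ?ltnS // nE yE mulnA eqn_modM2r.
Qed.

Import GRing.Theory Num.Theory.
Local Open Scope ring_scope.

Theorem mainTheorem2 (n l d y : nat) :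
  (l < n)%N -> (d %| n)%N -> y \in Zmd n d ->
  (count (fun x => has (fun b => x * b == y %[mod n]) (iota 0 l.+1)) (Zstar n))%:R
  = (rel_totient (n %/ d) (l %/ d))%:R / (totient (n %/ d))%:R * (totient n)%:R :> rat.
Proof.
move=> ln dn yZ; have [_ ym] := Zmd_coprime_div yZ.
have n0 : (0 < n)%N := leq_ltn_trans (leq0n l) ln.
have mn : (n %/ d %| n)%N := dvdn_div dn.
under eq_in_count => x xZ do rewrite (has_congr_reduce ln yZ xZ).
rewrite count_has_Zstar_congr ?(filter_uniq _ (uniq_Zstar _)) // => [|b]; last first.
  by rewrite mem_filter => /andP[].
rewrite size_filter -/(rel_totient _ _) (totient_units_kernel n0 mn) !natrM; field.
by rewrite pnatr_eq0 -lt0n totient_gt0 (dvdn_gt0 n0 mn).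
Qed.
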